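(* In the FAVANO process described in the context, for every time step $t\ge 0$, $$\mathbb{E}[\Phi_{t+1}]\le(1-\kappa)\,\mathbb{E}[\Phi_t]+3\frac{s^2}{n}\eta^2\sum_{i=1}^n\mathbb{E}\big\|\check h^i_{t+1}\big\|^2,\qquad \kappa=\frac{1}{n}\cdot\frac{s(n-s)}{2(n+1)(s+1)} .$$
   Context: FAVANO process. Fix integers $n\ge1$, $1\le s\le n$, $K\ge1$, $d\ge1$, a step size $\eta>0$ and differentiable $f_1,\dots,f_n:\mathbb{R}^d\to\mathbb{R}$, $f=\frac1n\sum_i f_i$. All random variables live on one probability space. For each client $i$ a stochastic gradient oracle returns, at a query point $x$, $\widetilde g^i(x)=\nabla f_i(x)+\xi$ where, conditionally on everything generated before the query (including $x$), $\xi$ has mean zero (each query uses fresh noise). Initialize $w_0\in\mathbb{R}^d$ deterministic and $w_0^i=w_0$ for all $i$. For each $t\ge1$, each client $i$ and each $q\ge1$ define recursively $\widetilde h^i_{t,q}=\widetilde g^i\big(w^i_{t-1}-\eta\sum_{r=1}^{q-1}\widetilde h^i_{t,r}\big)$ and $h^i_{t,q}=\nabla f_i\big(w^i_{t-1}-\eta\sum_{r=1}^{q-1}\widetilde h^i_{t,r}\big)$. At each $t\ge1$ there are random integers $E^1_t,\dots,E^n_t\ge0$ with $\mathbf{P}(E^i_t>0)>0$, and a random subset $\mathcal{S}_t\subseteq\{1,\dots,n\}$ uniformly distributed among subsets of size $s$; the family $(\mathcal S_t,E^1_t,\dots,E^n_t)$ is independent of all the other randomness (the past up to time $t-1$ and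 all $\widetilde h^i_{t,q}$), and $\mathcal S_t$ is independent of $(E^i_t)_i$. The weight $\alpha^i_t$ is either $\mathbf{P}(E^i_t>0)\,(E^i_t\wedge K)$ (stochastic version) or $\mathbb{E}[E^i_t\wedge K]$ (deterministic version), where $a\wedge b=\min(a,b)$. Set $\check h^i_t=\frac{1}{\alpha^i_t}\sum_{q=1}^{E^i_t\wedge K}\widetilde h^i_{t,q}$ if $E^i_t>0$ and $\check h^i_t=0$ otherwise. Updates: $w_t=\frac{1}{s+1}\big(w_{t-1}+\sum_{i\in\mathcal S_t}(w^i_{t-1}-\eta\check h^i_t)\big)$; $w^i_t=w_t$ for $i\in\mathcal S_t$ and $w^i_t=w^i_{t-1}$ for $i\notin\mathcal S_t$. Define $\mu_t=\frac{1}{n+1}\big(w_t+\sum_{i=1}^n w^i_t\big)$ and $\Phi_t=\|w_t-\mu_t\|^2+\sum_{i=1}^n\|w^i_t-\mu_t\|^2$. All expectations appearing are assumed finite. *)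

From HB Require Import structures.
From mathcomp Require Import all_boot all_order all_algebra.
From mathcomp Require Import all_classical all_reals all_analysis.
Set Implicit Arguments. Unset Strict Implicit. Unset Printing Implicit Defensive.
Import Order.TTheory GRing.Theory Num.Theory.
Import numFieldNormedType.Exports.
Local Open Scope classical_set_scope.
Local Open Scope ring_scope.

Definition sqnorm (R : realType) (d : nat) (v : 'rV[R]_d) : R :=
  \sum_(k < d) v 0 k ^+ 2.

(* gradient of f : R^d -> R, as the row vector of its partial derivatives
   (for differentiable f this is the gradient). *)
Definition gradf (R : realType) (d : nat) (f : 'rV[R]_d -> R) (x : 'rV[R]_d)
  : 'rV[R]_d := \row_(k < d) ('D_(delta_mx 0 k) f x).

(* Generators of the sigma-algebras generated by random elements. *)
Definition vec_events (R : realType) (T : Type) (d : nat) (X : T -> 'rV[R]_d)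
  : set (set T) :=
  [set A | exists (k : 'I_d) (B : set R), measurable B /\
                                 A = (fun x => X x 0 k) @^-1` B].

Definition nat_events (T : Type) (Y : T -> nat) : set (set T) :=
  [set A | exists m : nat, A = [set x | Y x = m]].

Definition subset_events (T : Type) (n : nat) (S : T -> {set 'I_n})
  : set (set T) := [set A | exists B : {set 'I_n}, A = [set x | S x = B]].

Definition indep_gen (R : realType) (dT : measure_display)
  (T : measurableType dT) (P : probability T R) (G1 G2 : set (set T)) : Prop :=
  forall A B, <<s G1 >> A -> <<s G2 >> B -> P (A `&` B) = (P A * P B)%E.

(* Events generated by the past up to time t-1: S_r, E^i_r (1 <= r < t)
   and all oracle outputs htil^j_{r,q} (1 <= r < t, q >= 1). *)
Definition past_events (R : realType) (T : Type) (n d : nat)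
  (Ssel : nat -> T -> {set 'I_n}) (E : nat -> 'I_n -> T -> nat)
  (htil : nat -> 'I_n -> nat -> T -> 'rV[R]_d) (t : nat) : set (set T) :=
  [set A | exists r, (1 <= r < t)%N /\
     (subset_events (Ssel r) A \/ (exists i, nat_events (E r i) A) \/
      exists i q, (1 <= q)%N /\ vec_events (htil r i q) A)].

Definition query_point (R : realType) (T : Type) (n d : nat) (eta : R)
  (htil : nat -> 'I_n -> nat -> T -> 'rV[R]_d) (wprev : 'rV[R]_d)
  (t : nat) (i : 'I_n) (q : nat) (x : T) : 'rV[R]_d :=
  wprev - eta *: \sum_(1 <= r < q) htil t i r x.

Definition alphaw (R : realType) (dT : measure_display) (T : measurableType dT)
  (P : probability T R) (n K : nat) (E : nat -> 'I_n -> T -> nat)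
  (stoch : bool) (t : nat) (i : 'I_n) (x : T) : R :=
  if stoch then fine (P [set y | (0 < E t i y)%N]) * (minn (E t i x) K)%:R
  else fine (\int[P]_y ((minn (E t i y) K)%:R)%:E)%E.

Definition hcheck (R : realType) (dT : measure_display) (T : measurableType dT)
  (P : probability T R) (n d K : nat) (E : nat -> 'I_n -> T -> nat)
  (htil : nat -> 'I_n -> nat -> T -> 'rV[R]_d) (stoch : bool)
  (t : nat) (i : 'I_n) (x : T) : 'rV[R]_d :=
  if (0 < E t i x)%N then
    (alphaw P K E stoch t i x)^-1 *: \sum_(1 <= q < (minn (E t i x) K).+1) htil t i q x
  else 0.

(* (w_t, (w^i_t)_i) *)
Fixpoint favano_state (R : realType) (dT : measure_display) (T : measurableType dT)
  (P : probability T R) (n d s K : nat) (eta : R) (w0 : 'rV[R]_d)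
  (Ssel : nat -> T -> {set 'I_n}) (E : nat -> 'I_n -> T -> nat)
  (htil : nat -> 'I_n -> nat -> T -> 'rV[R]_d) (stoch : bool)
  (t : nat) (x : T) : 'rV[R]_d * ('I_n -> 'rV[R]_d) :=
  match t with
  | 0 => (w0, fun _ => w0)
  | t'.+1 =>
    let st := favano_state P s K eta w0 Ssel E htil stoch t' x in
    let wn := (s.+1%:R)^-1 *:
       (st.1 + \sum_(i in Ssel t x) (st.2 i - eta *: hcheck P K E htil stoch t i x)) in
    (wn, fun i => if i \in Ssel t x then wn else st.2 i)
  end.

Definition mu_of (R : realType) (n d : nat) (st : 'rV[R]_d * ('I_n -> 'rV[R]_d))
  : 'rV[R]_d := (n.+1%:R)^-1 *: (st.1 + \sum_(i < n) st.2 i).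

Definition Phi_of (R : realType) (n d : nat) (st : 'rV[R]_d * ('I_n -> 'rV[R]_d))
  : R := sqnorm (st.1 - mu_of st) + \sum_(i < n) sqnorm (st.2 i - mu_of st).

(* Phi is a sum over the d coordinates of the one-dimensional dispersion
   (w - mu)^2 + sum_i (w^i - mu)^2, so fix a coordinate.  One round replaces w and the
   w^i, i in S, by their average after the local steps; averaging the new dispersion
   over all s-subsets S uses only that i lies in a fraction s/n of them and a pair
   i <> j in a fraction s(s-1)/(n(n-1)); after completing a square in the steps and
   Cauchy-Schwarz, this gives (1 - kappa) Phi_t + 3 s^2/n eta^2 sum_i |h^i|^2.
   Probabilistically, the state at time t and the oracle outputs of round t+1 are
   independent of (S_{t+1}, E_{t+1}), and hcheck^i_{t+1} depends on E^i_{t+1} only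
   through the clipped count E^i_{t+1} /\ K; conditioning on S_{t+1} and on the
   clipped counts therefore turns E[Phi_{t+1}] into that uniform average. *)

From HB Require Import structures.
From mathcomp Require Import all_boot all_order all_algebra perm.
From mathcomp Require Import all_classical all_reals all_analysis.
From mathcomp Require Import measurable_realfun ring lra zify.
Import Order.TTheory GRing.Theory Num.Theory.
Import numFieldNormedType.Exports.
Set Implicit Arguments. Unset Strict Implicit. Unset Printing Implicit Defensive.
Local Open Scope classical_set_scope.
Local Open Scope ring_scope.

Section GeneratedMeasurability.
Context (R : realType) (dT : measure_display) (T : measurableType dT).
Variable G : set (set T).
Local Notation T' := (g_sigma_algebraType G).

Definition gmeasurable (f : T -> R) := measurable_fun [set: T'] (f : T' -> R).

Lemma gmeasurable_cst c : gmeasurable (fun _ => c).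
Proof. exact: measurable_cst. Qed.

Lemma gmeasurableD f g : gmeasurable f -> gmeasurable g -> gmeasurable (fun x => f x + g x).
Proof. exact: measurable_funD. Qed.

Lemma gmeasurableB f g : gmeasurable f -> gmeasurable g -> gmeasurable (fun x => f x - g x).
Proof. exact: measurable_funB. Qed.

Lemma gmeasurableM f g : gmeasurable f -> gmeasurable g -> gmeasurable (fun x => f x * g x).
Proof. exact: measurable_funM. Qed.

Lemma eq_gmeasurable f g : (forall x, f x = g x) -> gmeasurable f -> gmeasurable g.
Proof. by move=> e; rewrite /gmeasurable (_ : g = f) //; apply/funext => x; rewrite e. Qed.

Lemma gmeasurableX f k : gmeasurable f -> gmeasurable (fun x => f x ^+ k).
Proof.
move=> mf; elim: k => [|k IH]; first exact: gmeasurable_cst.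
apply: (eq_gmeasurable (f := fun x => f x * f x ^+ k)) => [x|]; first by rewrite exprS.
exact: gmeasurableM.
Qed.

Lemma gmeasurable_sum (I : eqType) (r : seq I) (p : pred I) (h : I -> T -> R) :
  (forall i, i \in r -> p i -> gmeasurable (h i)) ->
  gmeasurable (fun x => \sum_(i <- r | p i) h i x).
Proof.
elim: r => [|a r IH] mh.
  by apply: (eq_gmeasurable (f := fun _ => 0)); [move=> x; rewrite big_nil|exact: gmeasurable_cst].
have mr : gmeasurable (fun x => \sum_(i <- r | p i) h i x).
  by apply: IH => i ir; apply: mh; rewrite inE ir orbT.
case pa : (p a).
  apply: (eq_gmeasurable (f := fun x => h a x + \sum_(i <- r | p i) h i x)).
    by move=> x; rewrite big_cons pa.
  by apply: gmeasurableD => //; apply: mh; rewrite ?inE ?eqxx.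
by apply: (eq_gmeasurable _ mr) => x; rewrite big_cons pa.
Qed.

Lemma gmeasurable_indic (b : T -> bool) :
  <<s G >> [set x | b x] -> gmeasurable (fun x => (b x)%:R).
Proof.
move=> mb; apply: (eq_gmeasurable (f := fun x => \1_[set x | b x] x)).
  move=> x; rewrite indicE; case: (boolP (b x)) => bx; first by rewrite mem_set.
  by rewrite memNset ?(negbTE bx) //=; apply/negP.
exact: (@measurable_indic _ T' R setT [set x | b x] mb).
Qed.

Lemma gmeasurable_generator (f : T -> R) :
  (forall U, measurable U -> G (f @^-1` U)) -> gmeasurable f.
Proof. by move=> fG _ U mU; rewrite setTI; apply: sub_sigma_algebra; exact: fG. Qed.

Lemma sigma_minn_eq (Y : T -> nat) (K c : nat) :
  (forall m, <<s G >> [set x | Y x = m]) -> <<s G >> [set x | minn (Y x) K == c].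
Proof.
move=> mY.
have -> : [set x | minn (Y x) K == c] =
    \bigcup_m (if minn m K == c then [set x | Y x = m] else set0).
  apply/seteqP; split => x /=.
    by move=> e; exists (Y x) => //; rewrite e.
  by move=> [m _]; case: ifP => // e /= ->.
apply: (@bigcupT_measurable _ T') => m.
by case: ifP => _; [exact: mY|exact: (@measurable0 _ T')].
Qed.

Hypothesis G_measurable : G `<=` measurable.

Lemma sigma_measurable C : <<s G >> C -> measurable C.
Proof. by apply: smallest_sub => //; exact: sigma_algebra_measurable. Qed.

Lemma gmeasurable_measurable_fun (f : T -> R) : gmeasurable f -> measurable_fun [set: T] f.
Proof.
move=> mf _ U mU; rewrite setTI; apply: sigma_measurable.
by have := mf measurableT U mU; rewrite setTI.
Qed.

End GeneratedMeasurability.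

Section IndependentIntegral.
Context (R : realType) (dT : measure_display) (T : measurableType dT) (P : probability T R).

Lemma measurable_fun_bool (b : T -> bool) :
  measurable [set x | b x] -> measurable_fun setT (fun x => (b x)%:R : R).
Proof.
move=> mb; rewrite (_ : (fun x => (b x)%:R) = \1_[set x | b x]).
  exact: measurable_indic.
apply/funext => x; rewrite indicE; case: (boolP (b x)) => bx; first by rewrite mem_set.
by rewrite memNset ?(negbTE bx) //=; apply/negP.
Qed.

Lemma ge0_integral_sumEFin (I : Type) (r : seq I) (f : I -> T -> R) :
  (forall i, measurable_fun setT (f i)) -> (forall i x, 0 <= f i x) ->
  (\int[P]_x (\sum_(i <- r) f i x)%:E = \sum_(i <- r) \int[P]_x (f i x)%:E)%E.
Proof.
move=> mf f0; under eq_integral do rewrite -sumEFin.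
apply: ge0_integral_sum => // i; first exact/measurable_EFinP.
by move=> x _; rewrite lee_fin.
Qed.

Lemma integral_bool_mul (A : set T) (b : T -> bool) (f : T -> R) :
  (forall x, b x = (x \in A)) ->
  (\int[P]_x ((b x)%:R * f x)%:E = \int[P]_(x in A) (f x)%:E)%E.
Proof.
move=> bA; rewrite [RHS]integral_mkcond; apply: eq_integral => x _.
by rewrite patchE -bA; case: (b x); rewrite ?mul1r ?mul0r.
Qed.

Lemma ge0_integralZl_EFin (c : R) (h : T -> R) :
  0 <= c -> measurable_fun setT h -> (forall x, 0 <= h x) ->
  (\int[P]_x (c * h x)%:E = c%:E * \int[P]_x (h x)%:E)%E.
Proof.
move=> c0 mh h0; under eq_integral do rewrite EFinM.
by rewrite ge0_integralZl //; [exact/measurable_EFinP|move=> x _; rewrite lee_fin].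
Qed.

Lemma ge0_integral_wsum (I : Type) (r : seq I) (a : I -> R) (f : I -> T -> R) :
  (forall i, 0 <= a i) -> (forall i, measurable_fun setT (f i)) -> (forall i x, 0 <= f i x) ->
  (\int[P]_x (\sum_(i <- r) a i * f i x)%:E = \sum_(i <- r) (a i)%:E * \int[P]_x (f i x)%:E)%E.
Proof.
move=> a0 mf f0; rewrite ge0_integral_sumEFin; last 2 first.
- by move=> i; apply: measurable_funM => //; exact: measurable_cst.
- by move=> i x; apply: mulr_ge0.
by apply: eq_bigr => i _; rewrite ge0_integralZl_EFin.
Qed.

Lemma ge0_integral_affine (I : Type) (r : seq I) (a b : R) (f : T -> R) (g : I -> T -> R) :
  0 <= a -> 0 <= b -> measurable_fun setT f -> (forall i, measurable_fun setT (g i)) ->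
  (forall x, 0 <= f x) -> (forall i x, 0 <= g i x) ->
  (\int[P]_x (a * f x + b * \sum_(i <- r) g i x)%:E =
   a%:E * \int[P]_x (f x)%:E + b%:E * \sum_(i <- r) \int[P]_x (g i x)%:E)%E.
Proof.
move=> a0 b0 mf mg f0 g0.
have mgs : measurable_fun setT (fun x => \sum_(i <- r) g i x) by exact: measurable_sum.
have gs0 x : 0 <= \sum_(i <- r) g i x by apply: sumr_ge0 => i _.
under eq_integral do rewrite EFinD.
rewrite ge0_integralD //; last 4 first.
- by move=> x _; rewrite lee_fin mulr_ge0.
- by apply/measurable_EFinP; apply: measurable_funM => //; exact: measurable_cst.
- by move=> x _; rewrite lee_fin mulr_ge0.
- by apply/measurable_EFinP; apply: measurable_funM => //; exact: measurable_cst.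
by rewrite !ge0_integralZl_EFin // ge0_integral_sumEFin.
Qed.

Variable G : set (set T).
Hypothesis G_measurable : G `<=` measurable.
Local Notation T' := (g_sigma_algebraType G).
Variable A : set T.
Hypothesis mA : measurable A.
Hypothesis A_indep : forall C, <<s G >> C -> P (A `&` C) = (P A * P C)%E.

Import HBNNSimple.

Let integral_nnsfun_indep (h : {nnsfun T' >-> R}) :
  (\int[P]_(x in A) (h x)%:E = P A * \int[P]_x (h x)%:E)%E.
Proof.
have mh r : measurable ((h : T -> R) @^-1` [set r]).
  exact: (sigma_measurable G_measurable (measurable_funPTI h (measurable_set1 r))).
have mh_ind r : measurable_fun setT (fun x => (r * \1_((h : T -> R) @^-1` [set r]) x)%:E).
  apply/measurable_EFinP; apply: measurable_funM; first exact: measurable_cst.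
  exact: measurable_indic.
have h_ind0 r x : (0 <= (r * \1_((h : T -> R) @^-1` [set r]) x)%:E)%E.
  by rewrite EFinM nnfun_muleindic_ge0.
under eq_integral do rewrite fimfunE -fsumEFin//.
rewrite ge0_integral_fsum//; last by move=> r; exact: measurable_funTS.
under [X in (_ * X)%E]eq_integral do rewrite fimfunE -fsumEFin//.
rewrite [X in (_ * X)%E]ge0_integral_fsum//.
rewrite ge0_mule_fsumr; last by move=> r; apply: integral_ge0.
apply: eq_fsbigr => r _.
have h_r0 : r < 0 -> (h : T -> R) @^-1` [set r] = set0.
  move=> r0; apply/seteqP; split => // x /= hx.
  have : 0 <= r by rewrite -hx; exact: fun_ge0.
  by rewrite leNgt r0.
rewrite (integralZl_indic mA (fun k => (h : T -> R) @^-1` [set k]))//.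
rewrite (integralZl_indic measurableT (fun k => (h : T -> R) @^-1` [set k]))//.
rewrite !integral_indic// setIT muleCA; congr (_ * _)%E; rewrite setIC; apply: A_indep.
exact: (measurable_funPTI h (measurable_set1 r)).
Qed.

Lemma ge0_integral_indep_event (Y : T' -> R) :
  measurable_fun [set: T'] Y -> (forall x, 0 <= Y x) ->
  (\int[P]_(x in A) (Y x)%:E = P A * \int[P]_x (Y x)%:E)%E.
Proof.
move=> mY Y0.
have mYe : measurable_fun [set: T'] (EFin \o Y) by apply/measurable_EFinP.
pose f_ := nnsfun_approx (@measurableT _ T') mYe.
have mf k : measurable_fun [set: T] (fun x => ((f_ k : T' -> R) x)%:E).
  by apply/measurable_EFinP; apply: (gmeasurable_measurable_fun G_measurable); rewrite /gmeasurable.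
have f_cvg x : (EFin \o (f_ ^~ x) @ \oo --> (Y x)%:E).
  apply: (@cvg_nnsfun_approx _ T' R setT (@measurableT _ T') (EFin \o Y) mYe) => //.
  by move=> y _; rewrite lee_fin.
have f_nd x : {homo (fun k => ((f_ k : T' -> R) x)%:E) : a b / (a <= b)%N >-> (a <= b)%E}.
  by move=> a b ab; rewrite lee_fin; exact/lefP/nd_nnsfun_approx.
have integral_lim (D : set T) : measurable D ->
    (\int[P]_(x in D) (Y x)%:E = limn (fun k => \int[P]_(x in D) ((f_ k : T' -> R) x)%:E))%E.
  move=> mD; rewrite -monotone_convergence//=.
  - by apply: eq_integral => x _; apply/esym/cvg_lim => //; exact: f_cvg.
  - by move=> k; exact: measurable_funTS.
  - by move=> k x _; rewrite lee_fin.
rewrite (integral_lim _ mA) (integral_lim _ measurableT) -limeMl ?fin_num_measure //.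
  by congr (limn _); apply/funext => k /=; rewrite integral_nnsfun_indep.
apply/ereal_nondecreasing_is_cvgn => a b ab; apply: ge0_le_integral => //.
all: by move=> x _; first [exact: f_nd | rewrite lee_fin].
Qed.

End IndependentIntegral.

Section IndependentSelection.
Context (R : realType) (dT : measure_display) (T : measurableType dT) (P : probability T R).
Variables G1 G2 : set (set T).
Hypotheses (G1_measurable : G1 `<=` measurable) (G2_measurable : G2 `<=` measurable).
Hypothesis G12_indep : indep_gen P G1 G2.

Lemma ge0_integral_indep_select (I : finType) (sel : T -> I) (F : I -> T -> R) :
  (forall i, <<s G1 >> [set x | sel x = i]) ->
  (forall i, gmeasurable G2 (F i)) -> (forall i x, 0 <= F i x) ->
  (\int[P]_x (F (sel x) x)%:E = \sum_i P [set x | sel x = i] * \int[P]_x (F i x)%:E)%E.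
Proof.
move=> sel_G1 mF F0.
have msel i : measurable [set x | sel x = i] := sigma_measurable G1_measurable (sel_G1 i).
have mFT i : measurable_fun setT (F i) := gmeasurable_measurable_fun G2_measurable (mF i).
have -> : (fun x => (F (sel x) x)%:E) = (fun x => (\sum_i (sel x == i)%:R * F i x)%:E).
  apply/funext => x; rewrite (bigD1 (sel x)) //= eqxx mul1r big1 ?addr0 //.
  by move=> i; rewrite eq_sym => /negbTE ->; rewrite mul0r.
rewrite ge0_integral_sumEFin; last 2 first.
- move=> i; apply: measurable_funM => //; apply: measurable_fun_bool.
  by rewrite (_ : [set x | _] = [set x | sel x = i]) //; apply/seteqP; split => x /= /eqP.
- by move=> i x; apply: mulr_ge0.
apply: eq_bigr => i _.
rewrite (@integral_bool_mul _ _ _ P [set x | sel x = i]); last first.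
  by move=> x; apply/idP/idP => [/eqP e|/set_mem /= ->]; rewrite ?mem_set.
have indep_i C : <<s G2 >> C -> P ([set x | sel x = i] `&` C) = (P [set x | sel x = i] * P C)%E.
  exact: G12_indep (sel_G1 i).
exact: (ge0_integral_indep_event G2_measurable (msel i) indep_i (mF i) (F0 i)).
Qed.

End IndependentSelection.

Section Counting.
Variables (R : realType) (n s : nat).

Definition pair_count (i j : 'I_n) : R :=
  \sum_(B : {set 'I_n} | #|B| == s) ((i \in B) && (j \in B))%:R.
Definition subset_count : R := \sum_(B : {set 'I_n} | #|B| == s) 1.

Lemma subset_countE : subset_count = 'C(n, s)%:R.
Proof.
by rewrite /subset_count -[X in 'C(X, s)](card_ord n) -card_draws -sum1dep_card natr_sum.
Qed.

Lemma pair_count_perm (sg : {perm 'I_n}) i j : pair_count (sg i) (sg j) = pair_count i j.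
Proof.
rewrite /pair_count (reindex_inj (imset_inj (@perm_inj _ sg))) /=.
apply: eq_big => B; first by rewrite card_imset //; exact: perm_inj.
by move=> _; rewrite !mem_imset //; exact: perm_inj.
Qed.

Lemma pair_count_diag_eq i j : pair_count i i = pair_count j j.
Proof. by rewrite -(pair_count_perm (tperm i j) i i) tpermL. Qed.

Lemma pair_count_offdiag_eq i j i' j' : i != j -> i' != j' -> pair_count i j = pair_count i' j'.
Proof.
move=> ij ij'.
pose t1 := tperm i i'. pose t2 := tperm (t1 j) j'.
have e1 : t2 (t1 i) = i'.
  rewrite /t2 /t1 tpermL tpermD //; last by rewrite eq_sym.
  by rewrite -{2}(tpermL i i') (inj_eq perm_inj) eq_sym.
have e2 : t2 (t1 j) = j' by rewrite /t2 tpermL.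
by rewrite -e1 -e2 !pair_count_perm.
Qed.

Lemma sum_subsets_sum_in (f : 'I_n -> R) :
  \sum_(B : {set 'I_n} | #|B| == s) \sum_(i in B) f i = \sum_i pair_count i i * f i.
Proof.
under eq_bigr do rewrite big_mkcond /=.
rewrite exchange_big /=; apply: eq_bigr => i _; rewrite /pair_count mulr_suml.
by apply: eq_bigr => B _; rewrite andbb; case: (i \in B); rewrite ?mul1r ?mul0r.
Qed.

Lemma sum_subsets_sum_in2 (f : 'I_n -> 'I_n -> R) :
  \sum_(B : {set 'I_n} | #|B| == s) \sum_(i in B) \sum_(j in B) f i j =
  \sum_i \sum_j pair_count i j * f i j.
Proof.
transitivity (\sum_(B : {set 'I_n} | #|B| == s) \sum_i \sum_j
    (((i \in B) && (j \in B))%:R * f i j)).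
  apply: eq_bigr => B _; rewrite big_mkcond /=; apply: eq_bigr => i _.
  case: (i \in B) => /=; last by rewrite big1 // => j _; rewrite mul0r.
  by rewrite big_mkcond; apply: eq_bigr => j _; case: (j \in B); rewrite ?mul1r ?mul0r.
rewrite exchange_big /=; apply: eq_bigr => i _.
rewrite exchange_big /=; apply: eq_bigr => j _.
by rewrite /pair_count mulr_suml.
Qed.

Lemma sum_mem_card (B : {set 'I_n}) : \sum_j ((j \in B)%:R : R) = #|B|%:R.
Proof.
rewrite (eq_bigr (fun j => if j \in B then 1 else 0)); last by move=> j _; case: (j \in B).
by rewrite -big_mkcond /= -sum1_card natr_sum.
Qed.

Lemma pair_count_diag_mul i : n%:R * pair_count i i = s%:R * subset_count.
Proof.
have -> : n%:R * pair_count i i = \sum_(j : 'I_n) pair_count j j.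
  rewrite (eq_bigr (fun _ => pair_count i i)) ?sumr_const ?card_ord ?mulr_natl //.
  by move=> j _; rewrite (pair_count_diag_eq j i).
rewrite /pair_count exchange_big /= /subset_count mulr_sumr; apply: eq_bigr => B /eqP <-.
by under eq_bigr do rewrite andbb; rewrite sum_mem_card mulr1.
Qed.

Lemma pair_count_offdiag_mul i j : i != j ->
  n%:R * (n%:R - 1) * pair_count i j = s%:R * (s%:R - 1) * subset_count.
Proof.
move=> ij.
have cst (i' : 'I_n) (c : R) : \sum_(j' | j' != i') c = n%:R * c - c :> R.
  have := @bigD1 R +%R 0 _ i' predT (fun _ => c) isT => /=.
  by rewrite sumr_const card_ord mulr_natl => ->; rewrite addrC addrK.
have -> : n%:R * (n%:R - 1) * pair_count i j =
    \sum_(i' : 'I_n) \sum_(j' | j' != i') pair_count i' j'.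
  rewrite (eq_bigr (fun _ => n%:R * pair_count i j - pair_count i j)); last first.
    move=> i' _; rewrite -(cst i'); apply: eq_bigr => j' ji'.
    by apply: pair_count_offdiag_eq => //; rewrite eq_sym.
  by rewrite sumr_const card_ord mulr_natl -mulr_natl; ring.
rewrite /pair_count.
under eq_bigr do rewrite exchange_big /=.
rewrite exchange_big /= /subset_count mulr_sumr; apply: eq_bigr => B /eqP cB.
rewrite mulr1.
transitivity (\sum_(i' : 'I_n) ((i' \in B)%:R * (s%:R - 1)) : R).
  apply: eq_bigr => i' _.
  have := @bigD1 R +%R 0 _ i' predT (fun j' => ((j' \in B)%:R : R)) isT => /=.
  rewrite sum_mem_card cB => e.
  transitivity ((i' \in B)%:R * \sum_(j' | j' != i') ((j' \in B)%:R : R)).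
    by rewrite mulr_sumr; apply: eq_bigr => j' _; rewrite -natrM mulnb.
  have -> : \sum_(j' | j' != i') ((j' \in B)%:R : R) = s%:R - (i' \in B)%:R.
    by rewrite e addrC addrK.
  by case: (i' \in B); rewrite ?mul0r ?mul1r.
by rewrite -mulr_suml sum_mem_card cB.
Qed.


Hypothesis n_gt0 : (0 < n)%N.

Lemma pair_count_diagE i : pair_count i i = s%:R / n%:R * subset_count.
Proof.
have nz : (n%:R : R) != 0 by rewrite pnatr_eq0 -lt0n.
by apply: (mulfI nz); rewrite pair_count_diag_mul; field.
Qed.

Lemma pair_count_offdiagE i j : i != j ->
  pair_count i j = s%:R * (s%:R - 1) / (n%:R * (n%:R - 1)) * subset_count.
Proof.
move=> ij.
have n_gt1 : (1 < n)%N.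
  have ij' : nat_of_ord i != nat_of_ord j by [].
  by move: (ltn_ord i) (ltn_ord j) ij'; lia.
have nz : (n%:R * (n%:R - 1) : R) != 0.
  by rewrite mulf_eq0 negb_or pnatr_eq0 -lt0n n_gt0 /= subr_eq0 pnatr_eq1 neq_ltn n_gt1 orbT.
apply: (mulfI nz); rewrite (pair_count_offdiag_mul ij); field.
by move: nz; rewrite mulf_eq0 negb_or andbC.
Qed.

Lemma sum_pair_count_mul (u : 'I_n -> R) :
  \sum_i \sum_j pair_count i j * (u i * u j) =
  s%:R / n%:R * subset_count * \sum_i u i ^+ 2 +
  s%:R * (s%:R - 1) / (n%:R * (n%:R - 1)) * subset_count * ((\sum_i u i) ^+ 2 - \sum_i u i ^+ 2).
Proof.
set N1 := s%:R / n%:R * subset_count.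
set N2 := s%:R * (s%:R - 1) / (n%:R * (n%:R - 1)) * subset_count.
transitivity (\sum_i (N1 * u i ^+ 2 + N2 * (u i * (\sum_j u j - u i)))).
  apply: eq_bigr => i _.
  rewrite (bigD1 i) //= pair_count_diagE -/N1 expr2; congr (_ + _).
  have -> : \sum_j u j - u i = \sum_(j | j != i) u j.
    by rewrite [\sum_j u j](bigD1 i) //= addrC addrK.
  rewrite !mulr_sumr; apply: eq_bigr => j ji.
  by rewrite pair_count_offdiagE 1?eq_sym.
rewrite big_split /= -!mulr_sumr; congr (_ + _); congr (_ * _).
rewrite expr2 mulr_suml -sumrB; apply: eq_bigr => i _.
by rewrite mulrBr expr2.
Qed.

Lemma sum_subsets_const (c : R) : \sum_(B : {set 'I_n} | #|B| == s) c = c * subset_count.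
Proof. by rewrite /subset_count mulr_sumr; apply: eq_bigr => B _; rewrite mulr1. Qed.

End Counting.

Section MergeStep.
Variables (R : realType) (n s : nat).

(* One coordinate of a configuration: [a] plays the server model w, [y i] the local
   model w^i; [merged] is the new server model when the clients in [B] send y_i - h_i. *)
Definition barycenter (a : R) (y : 'I_n -> R) := (a + \sum_i y i) / n.+1%:R.
Definition dispersion (a : R) (y : 'I_n -> R) :=
  (a - barycenter a y) ^+ 2 + \sum_i (y i - barycenter a y) ^+ 2.
Definition merged (B : {set 'I_n}) (a : R) (y h : 'I_n -> R) :=
  (s.+1%:R)^-1 * (a + \sum_(i in B) (y i - h i)).
Definition merged_locals (B : {set 'I_n}) (a : R) (y h : 'I_n -> R) (i : 'I_n) :=
  if i \in B then merged B a y h else y i.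

Lemma sum_sqr_shift (P : pred 'I_n) (f : 'I_n -> R) c :
  \sum_(i | P i) (f i - c) ^+ 2 =
  \sum_(i | P i) f i ^+ 2 - 2 * c * \sum_(i | P i) f i + \sum_(i | P i) c ^+ 2.
Proof.
rewrite (eq_bigr (fun i => (f i ^+ 2 - 2 * c * f i) + c ^+ 2)); last by move=> i _; ring.
by rewrite big_split /= sumrB mulr_sumr.
Qed.

Lemma sum_in_notin (B : {set 'I_n}) (F : 'I_n -> R) :
  \sum_i F i = \sum_(i in B) F i + \sum_(i | i \notin B) F i.
Proof. by rewrite (bigID (mem B)). Qed.

Lemma dispersionE a y :
  dispersion a y = a ^+ 2 + \sum_i y i ^+ 2 - (a + \sum_i y i) ^+ 2 / n.+1%:R.
Proof.
rewrite /dispersion sum_sqr_shift sumr_const card_ord /barycenter -mulr_natl.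
have hn : (n.+1%:R : R) != 0 by rewrite pnatr_eq0.
by field.
Qed.

Lemma sqr_sum_le_card_sum (B : {set 'I_n}) (h : 'I_n -> R) :
  (\sum_(i in B) h i) ^+ 2 <= #|B|%:R * \sum_(i in B) h i ^+ 2.
Proof.
set S := \sum_(i in B) h i. set Q := \sum_(i in B) h i ^+ 2.
have e : \sum_(i in B) \sum_(j in B) (h j - h i) ^+ 2 = 2 * (#|B|%:R * Q - S ^+ 2).
  under eq_bigr do rewrite sum_sqr_shift sumr_const.
  rewrite big_split /= sumrB.
  have -> : \sum_(i in B) Q = #|B|%:R * Q by rewrite sumr_const mulr_natl.
  have -> : \sum_(i in B) (2 * h i * S) = 2 * S * S.
    by rewrite -mulr_suml -mulr_sumr.
  have -> : \sum_(i in B) (h i ^+ 2 *+ #|B|) = #|B|%:R * Q by rewrite sumrMnl mulr_natl.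
  ring.
have : 0 <= \sum_(i in B) \sum_(j in B) (h j - h i) ^+ 2.
  by apply: sumr_ge0 => i _; apply: sumr_ge0 => j _; exact: sqr_ge0.
by rewrite e pmulr_rge0 // subr_ge0.
Qed.

(* The slack is (u_0 + \sum_(i in B) u_i + 2 \sum_(i in B) h_i)^2 / (2 (s+1)),
   where u_0 = a - m and u_i = y_i - m are the deviations from the barycenter m. *)
Lemma dispersion_merged_le (B : {set 'I_n}) a y h : #|B| = s ->
  dispersion (merged B a y h) (merged_locals B a y h) <=
  dispersion a y - ((a - barycenter a y) ^+ 2 + \sum_(i in B) (y i - barycenter a y) ^+ 2)
  + 3 / (2 * s.+1%:R) * (a - barycenter a y + \sum_(i in B) (y i - barycenter a y)) ^+ 2
  + (2 + (n%:R - s%:R) / n.+1%:R) / s.+1%:R * (\sum_(i in B) h i) ^+ 2.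
Proof.
move=> cB.
set m := barycenter a y.
set Tin := \sum_(i in B) y i. set Tout := \sum_(i | i \notin B) y i.
set Qin := \sum_(i in B) y i ^+ 2. set Qout := \sum_(i | i \notin B) y i ^+ 2.
set H := \sum_(i in B) h i.
have eY : \sum_i y i = Tin + Tout by rewrite (sum_in_notin B).
have eQ : \sum_i y i ^+ 2 = Qin + Qout by rewrite (sum_in_notin B).
have ew : merged B a y h = (a + Tin - H) / s.+1%:R.
  by rewrite /merged sumrB addrA mulrC.
have eNY : \sum_i merged_locals B a y h i = s%:R * merged B a y h + Tout.
  rewrite (sum_in_notin B); congr (_ + _).
    rewrite (eq_bigr (fun _ => merged B a y h)); last by move=> i iB; rewrite /merged_locals iB.
    by rewrite sumr_const cB mulr_natl.
  by apply: eq_bigr => i iB; rewrite /merged_locals (negbTE iB).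
have eNQ : \sum_i merged_locals B a y h i ^+ 2 = s%:R * merged B a y h ^+ 2 + Qout.
  rewrite (sum_in_notin B); congr (_ + _).
    rewrite (eq_bigr (fun _ => merged B a y h ^+ 2)); last first.
      by move=> i iB; rewrite /merged_locals iB.
    by rewrite sumr_const cB mulr_natl.
  by apply: eq_bigr => i iB; rewrite /merged_locals (negbTE iB).
have eSG : \sum_(i in B) (y i - m) ^+ 2 = Qin - 2 * m * Tin + s%:R * m ^+ 2.
  by rewrite sum_sqr_shift sumr_const cB -[m ^+ 2 *+ s]mulr_natl.
have eG : \sum_(i in B) (y i - m) = Tin - s%:R * m.
  by rewrite sumrB sumr_const cB -[m *+ s]mulr_natl.
have em : m = (a + (Tin + Tout)) / n.+1%:R by rewrite /m /barycenter eY.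
rewrite !dispersionE eNY eNQ eY eQ eSG eG ew em.
have s1 : (s.+1%:R : R) != 0 by rewrite pnatr_eq0.
have n1 : (n.+1%:R : R) != 0 by rewrite pnatr_eq0.
rewrite -subr_ge0.
set Mv := (a + (Tin + Tout)) / n.+1%:R.
match goal with |- is_true (_ <= ?X) =>
  have -> : X = (a - Mv + Tin - s%:R * Mv + 2 * H) ^+ 2 / (2 * s.+1%:R) end.
  rewrite /Mv. field.
  by apply/andP; split; rewrite addrC natr1 pnatr_eq0.
apply: divr_ge0; first exact: sqr_ge0.
by rewrite mulr_ge0.
Qed.

Lemma sum_deviations (a : R) (y : 'I_n -> R) :
  \sum_i (y i - barycenter a y) = - (a - barycenter a y).
Proof.
rewrite sumrB sumr_const card_ord /barycenter -mulr_natl.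
have nz : (n.+1%:R : R) != 0 by rewrite pnatr_eq0.
by move: nz; rewrite mulrSr => nz; field; rewrite addrC.
Qed.

End MergeStep.

Definition favano_kappa (R : realType) (n s : nat) : R :=
  n%:R^-1 * ((s * (n - s))%:R / (2 * n.+1 * s.+1)%:R).

Section Coefficients.
Variable R : realType.

(* For n >= 2, the coefficients of U and U0 in the gap of [averaged_bound_le] below. *)
Lemma local_slack_ge0 (N S : R) : 1 <= S -> S <= N -> 2 <= N ->
  0 <= S / N - S * (N - S) / (2 * N * (N + 1) * (S + 1))
       - 3 / (2 * (S + 1)) * (S / N - S * (S - 1) / (N * (N - 1))).
Proof.
move=> S1 SN N2.
have -> : S / N - S * (N - S) / (2 * N * (N + 1) * (S + 1))
       - 3 / (2 * (S + 1)) * (S / N - S * (S - 1) / (N * (N - 1))) =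
   S * (2 * (S + 1) * (N * N - 1) - (N - S) * (4 * N + 2)) /
     (2 * (S + 1) * N * (N + 1) * (N - 1)).
  field.
  by repeat (apply/andP; split); apply/eqP; lra.
apply: divr_ge0.
  apply: mulr_ge0; first lra.
  nra.
apply: mulr_ge0; last lra.
apply: mulr_ge0; last lra.
apply: mulr_ge0; last lra.
apply: mulr_ge0; lra.
Qed.

Lemma server_slack_ge0 (N S : R) : 1 <= S -> S <= N -> 2 <= N ->
  0 <= 1 - S * (N - S) / (2 * N * (N + 1) * (S + 1))
       - 3 / (2 * (S + 1)) * (1 - 2 * (S / N) + S * (S - 1) / (N * (N - 1))).
Proof.
move=> S1 SN N2.
have -> : 1 - S * (N - S) / (2 * N * (N + 1) * (S + 1))
       - 3 / (2 * (S + 1)) * (1 - 2 * (S / N) + S * (S - 1) / (N * (N - 1))) =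
   (2 * (S + 1) * N * (N + 1) * (N - 1) - S * (N - S) * (N - 1)
      - 3 * (N + 1) * (N - S) * (N - S - 1)) /
     (2 * (S + 1) * N * (N + 1) * (N - 1)).
  field.
  by repeat (apply/andP; split); apply/eqP; lra.
apply: divr_ge0.
  have h1 : 3 * (N + 1) * (N - S) * (N - S - 1) <= 3 * (N + 1) * (N - S) * (N - 1).
    apply: ler_wpM2l; last lra.
    apply: mulr_ge0; lra.
  have hQ : 0 <= (N - 1) * (2 * S * N * N + 4 * S * N - N * N - N + S * S + 3 * S).
    apply: mulr_ge0; first lra.
    nra.
  nra.
apply: mulr_ge0; last lra.
apply: mulr_ge0; last lra.
apply: mulr_ge0; last lra.
apply: mulr_ge0; lra.
Qed.

Lemma favano_kappaE (n s : nat) : (0 < n)%N -> (s <= n)%N ->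
  favano_kappa R n s = s%:R * (n%:R - s%:R) / (2 * n%:R * (n%:R + 1) * (s%:R + 1)).
Proof.
move=> n0 sn.
have N0 : (0 : R) < n%:R by rewrite ltr0n.
have S0 : (0 : R) <= s%:R by [].
rewrite /favano_kappa !natrM natrB // !mulrSr.
field; repeat (apply/andP; split); apply/eqP; lra.
Qed.

Lemma favano_kappa_le1 (n s : nat) : (0 < n)%N -> (s <= n)%N -> favano_kappa R n s <= 1.
Proof.
move=> n_gt0 sn; rewrite favano_kappaE //.
have S0 : (0 : R) <= s%:R by [].
have SN : (s%:R : R) <= n%:R by rewrite ler_nat.
have N1 : (1 : R) <= n%:R by rewrite ler1n.
rewrite ler_pdivrMr; last by rewrite !mulr_gt0 //; lra.
nra.
Qed.

(* With U0 = (w - mu)^2, U = sum_i (w^i - mu)^2 and H = sum_i h_i^2, the left side is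
   the sum over the M subsets of size s of the bound of [dispersion_merged_le_sum_sqr]. *)
Lemma averaged_bound_le (n s : nat) (M U0 U H : R) : (1 <= s <= n)%N ->
  0 <= M -> 0 <= U0 -> 0 <= U -> 0 <= H ->
  M * (U0 + U) - (M * U0 + s%:R / n%:R * M * U)
  + 3 / (2 * s.+1%:R) * (M * U0 - 2 * (s%:R / n%:R * M) * U0 + s%:R / n%:R * M * U
       + s%:R * (s%:R - 1) / (n%:R * (n%:R - 1)) * M * (U0 - U))
  + (2 + (n%:R - s%:R) / n.+1%:R) / s.+1%:R * (s%:R * (s%:R / n%:R * M * H))
  <= M * ((1 - favano_kappa R n s) * (U0 + U)
           + 3 * (s%:R ^+ 2 / n%:R) * H).
Proof.
move=> /andP[s1 sn] M_ge0 U0_ge0 U_ge0 H_ge0.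
rewrite favano_kappaE //; last exact: (leq_trans s1 sn).
have eN : (n.+1%:R : R) = n%:R + 1 by rewrite mulrSr.
have eS : (s.+1%:R : R) = s%:R + 1 by rewrite mulrSr.
rewrite eN eS.
set N := (n%:R : R). set S := (s%:R : R).
have S1 : 1 <= S by rewrite /S ler1n.
have SN : S <= N by rewrite /S /N ler_nat.
have N0 : 0 < N by rewrite /N ltr0n; exact: (leq_trans s1 sn).
set k := S * (N - S) / (2 * N * (N + 1) * (S + 1)).
set p := S / N. set q := S * (S - 1) / (N * (N - 1)).
set c3 := 3 / (2 * (S + 1)). set cH := (2 + (N - S) / (N + 1)) / (S + 1).
rewrite -subr_ge0.
have -> : M * ((1 - k) * (U0 + U) + 3 * (S ^+ 2 / N) * H) -
  (M * (U0 + U) - (M * U0 + p * M * U) +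
   c3 * (M * U0 - 2 * (p * M) * U0 + p * M * U + q * M * (U0 - U)) +
   cH * (S * (p * M * H))) =
  M * ((1 - k - c3 * (1 - 2 * p + q)) * U0 + (p - k - c3 * (p - q)) * U
        + (S * p * (3 - cH)) * H).
  rewrite /p; field; lra.
apply: mulr_ge0 => //.
have coefH_ge0 : 0 <= S * p * (3 - cH).
  apply: mulr_ge0; first by apply: mulr_ge0; [lra| rewrite /p; apply: divr_ge0; lra].
  rewrite subr_ge0 /cH ler_pdivrMr; last lra.
  have : (N - S) / (N + 1) <= 1 by rewrite ler_pdivrMr; lra.
  have : 0 <= (N - S) / (N + 1) by apply: divr_ge0; lra.
  nra.
case: (ltrP 1 N) => [N2|N1].
  have N_ge2 : 2 <= N by move: N2; rewrite /N ltr1n ler_nat.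
  have server_ge0 := server_slack_ge0 S1 SN N_ge2.
  have local_ge0 := local_slack_ge0 S1 SN N_ge2.
  by apply: addr_ge0; [apply: addr_ge0|]; apply: mulr_ge0.
(* Here n = s = 1, and the pair frequency q is 0 / 0 = 0. *)
have eN1 : N = 1 by apply/eqP; rewrite eq_le N1 /=; move: N0; rewrite /N ltr0n ler1n.
have eS1 : S = 1 by apply/eqP; rewrite eq_le S1 andbT -eN1.
rewrite /k /p /q /c3 eS1 eN1 !subrr !mulr0 !mul0r !divr1 ?mul0r.
rewrite (_ : 3 / (2 * (1 + 1)) = 3 / 4 :> R); last by field.
apply: addr_ge0; [apply: addr_ge0|]; apply: mulr_ge0 => //; try lra.
by move: coefH_ge0; rewrite /p eS1 eN1 divr1 !mul1r.
Qed.

End Coefficients.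

Section SubsetAverage.
Variables (R : realType) (n s : nat).
Hypothesis s_range : (1 <= s <= n)%N.

Let n_gt0 : (0 < n)%N. Proof. by case/andP: s_range => s1 sn; exact: leq_trans s1 sn. Qed.
Local Notation M := (subset_count R n s).

Lemma dispersion_merged_le_sum_sqr (B : {set 'I_n}) a y (h : 'I_n -> R) : #|B| = s ->
  dispersion (merged s B a y h) (merged_locals s B a y h) <=
  dispersion a y - ((a - barycenter a y) ^+ 2 + \sum_(i in B) (y i - barycenter a y) ^+ 2)
  + 3 / (2 * s.+1%:R) * (a - barycenter a y + \sum_(i in B) (y i - barycenter a y)) ^+ 2
  + (2 + (n%:R - s%:R) / n.+1%:R) / s.+1%:R * (s%:R * \sum_(i in B) h i ^+ 2).
Proof.
move=> cB; apply: le_trans (dispersion_merged_le a y h cB) _.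
rewrite lerD2l; apply: ler_wpM2l; last by rewrite -cB; exact: sqr_sum_le_card_sum.
apply: divr_ge0 => //; apply: addr_ge0 => //; apply: divr_ge0 => //.
by rewrite subr_ge0 ler_nat; case/andP: s_range.
Qed.

Lemma sum_subsets_dispersion_le (a : R) (y h : 'I_n -> R) :
  \sum_(B : {set 'I_n} | #|B| == s) dispersion (merged s B a y h) (merged_locals s B a y h) <=
  M * ((1 - favano_kappa R n s) * dispersion a y + 3 * (s%:R ^+ 2 / n%:R) * \sum_i h i ^+ 2).
Proof.
set m := barycenter a y; set u0 := a - m; pose u i := y i - m.
pose c3 : R := 3 / (2 * s.+1%:R).
pose cH : R := (2 + (n%:R - s%:R) / n.+1%:R) / s.+1%:R.
have dispersionE : dispersion a y = u0 ^+ 2 + \sum_i u i ^+ 2 by [].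
pose c0 : R := dispersion a y - u0 ^+ 2 + c3 * u0 ^+ 2.
pose A1 (B : {set 'I_n}) := \sum_(i in B) u i ^+ 2.
pose A2 (B : {set 'I_n}) := \sum_(i in B) u i.
pose A3 (B : {set 'I_n}) := \sum_(i in B) \sum_(j in B) u i * u j.
pose A4 (B : {set 'I_n}) := \sum_(i in B) h i ^+ 2.
apply: (@le_trans _ _ (\sum_(B : {set 'I_n} | #|B| == s)
   (c0 + (-1) * A1 B + (2 * c3 * u0) * A2 B
     + c3 * A3 B + (cH * s%:R) * A4 B))).
  apply: ler_sum => B /eqP cB; apply: le_trans (dispersion_merged_le_sum_sqr a y h cB) _.
  have A3E : A3 B = A2 B ^+ 2.
    by rewrite /A3 /A2 expr2 mulr_suml; apply: eq_bigr => i _; rewrite mulr_sumr.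
  by rewrite A3E -/m -/u0 /c0 /c3 /cH /A1 /A2 /A4 /u le_eqVlt; apply/orP; left; apply/eqP; ring.
rewrite big_split big_split big_split big_split /= sum_subsets_const -!mulr_sumr.
have sum_diag (f : 'I_n -> R) :
    \sum_(B : {set 'I_n} | #|B| == s) \sum_(i in B) f i = s%:R / n%:R * M * \sum_i f i.
  by rewrite sum_subsets_sum_in mulr_sumr; apply: eq_bigr => i _; rewrite pair_count_diagE.
rewrite /A1 /A2 /A4 !sum_diag /A3 sum_subsets_sum_in2 sum_pair_count_mul //.
rewrite sum_deviations -/m -/u0.
have M0 : 0 <= M by apply: sumr_ge0.
have S0 : 0 <= \sum_i u i ^+ 2 by apply: sumr_ge0 => i _; exact: sqr_ge0.
have H0 : 0 <= \sum_i h i ^+ 2 by apply: sumr_ge0 => i _; exact: sqr_ge0.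
apply: le_trans (averaged_bound_le s_range M0 (sqr_ge0 u0) S0 H0).
by rewrite /c0 dispersionE /c3 /cH le_eqVlt; apply/orP; left; apply/eqP; ring.
Qed.

End SubsetAverage.

Section VectorStep.
Variables (R : realType) (n s d : nat) (eta : R).

Definition favano_step (st0 : 'rV[R]_d * ('I_n -> 'rV[R]_d)) (B : {set 'I_n})
    (hh : 'I_n -> 'rV[R]_d) :=
  let wn := (s.+1%:R)^-1 *: (st0.1 + \sum_(i in B) (st0.2 i - eta *: hh i)) in
  (wn, fun i => if i \in B then wn else st0.2 i).

Lemma sqnorm_ge0 (v : 'rV[R]_d) : 0 <= sqnorm v.
Proof. by apply: sumr_ge0 => k _; exact: sqr_ge0. Qed.

Lemma Phi_of_ge0 (st0 : 'rV[R]_d * ('I_n -> 'rV[R]_d)) : 0 <= Phi_of st0.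
Proof. by apply: addr_ge0; [exact: sqnorm_ge0|apply: sumr_ge0 => i _; exact: sqnorm_ge0]. Qed.

Lemma Phi_of_coord (st0 : 'rV[R]_d * ('I_n -> 'rV[R]_d)) :
  Phi_of st0 = \sum_k dispersion (st0.1 0 k) (fun i => st0.2 i 0 k).
Proof.
rewrite /Phi_of /dispersion /sqnorm /mu_of /barycenter.
rewrite big_split /=; congr (_ + _).
  by apply: eq_bigr => k _; rewrite !mxE summxE mulrC.
rewrite exchange_big /=; apply: eq_bigr => k _; apply: eq_bigr => i _.
by rewrite !mxE summxE mulrC.
Qed.

Lemma favano_step1E st0 B hh k :
  (favano_step st0 B hh).1 0 k =
  merged s B (st0.1 0 k) (fun i => st0.2 i 0 k) (fun i => eta * hh i 0 k).
Proof.
rewrite /favano_step /merged /= !mxE summxE; congr (_ * (_ + _)).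
by apply: eq_bigr => i _; rewrite !mxE.
Qed.

Lemma Phi_of_favano_step st0 B hh :
  Phi_of (favano_step st0 B hh) = \sum_k
    dispersion (merged s B (st0.1 0 k) (fun i => st0.2 i 0 k) (fun i => eta * hh i 0 k))
      (merged_locals s B (st0.1 0 k) (fun i => st0.2 i 0 k) (fun i => eta * hh i 0 k)).
Proof.
rewrite Phi_of_coord; apply: eq_bigr => k _; rewrite favano_step1E; congr dispersion.
by apply/funext => i; rewrite /merged_locals /=; case: (i \in B); rewrite ?favano_step1E.
Qed.

Hypothesis s_range : (1 <= s <= n)%N.

Lemma sum_subsets_Phi_step_le st0 hh :
  \sum_(B : {set 'I_n} | #|B| == s) Phi_of (favano_step st0 B hh) <=
  subset_count R n s * ((1 - favano_kappa R n s) * Phi_of st0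
         + 3 * (s%:R ^+ 2 / n%:R) * eta ^+ 2 * \sum_i sqnorm (hh i)).
Proof.
under eq_bigr do rewrite Phi_of_favano_step.
rewrite exchange_big /=.
apply: le_trans (ler_sum _ (fun k _ => sum_subsets_dispersion_le s_range _ _ _)) _.
have sqnormE : \sum_k \sum_i (eta * hh i 0 k) ^+ 2 = eta ^+ 2 * \sum_i sqnorm (hh i).
  rewrite /sqnorm mulr_sumr exchange_big /=; apply: eq_bigr => i _.
  by rewrite mulr_sumr; apply: eq_bigr => k _; rewrite exprMn.
rewrite -mulr_sumr big_split /= -!mulr_sumr -Phi_of_coord sqnormE !mulrA.
exact: lexx.
Qed.

End VectorStep.

Section StepMeasurability.
Context (R : realType) (dT : measure_display) (T : measurableType dT).
Variable G : set (set T).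
Variables (n s d : nat) (eta : R).
Local Notation gmeasurable := (@gmeasurable R dT T G).

Lemma gmeasurable_dispersion (a : T -> R) (y : 'I_n -> T -> R) :
  gmeasurable a -> (forall i, gmeasurable (y i)) ->
  gmeasurable (fun x => dispersion (a x) (fun i => y i x)).
Proof.
move=> ma my.
have mm : gmeasurable (fun x => barycenter (a x) (fun i => y i x)).
  apply: gmeasurableM; last exact: gmeasurable_cst.
  by apply: gmeasurableD => //; apply: gmeasurable_sum => i _ _.
apply: gmeasurableD; first by apply: gmeasurableX; apply: gmeasurableB.
by apply: gmeasurable_sum => i _ _; apply: gmeasurableX; apply: gmeasurableB.
Qed.

Definition gmeasurable_config (st : T -> 'rV[R]_d * ('I_n -> 'rV[R]_d)) :=
  (forall k, gmeasurable (fun x => (st x).1 0 k)) /\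
  (forall i k, gmeasurable (fun x => (st x).2 i 0 k)).

Lemma gmeasurable_Phi_of st : gmeasurable_config st -> gmeasurable (fun x => Phi_of (st x)).
Proof.
move=> [m1 m2]; apply: (eq_gmeasurable (f := fun x =>
  \sum_k dispersion ((st x).1 0 k) (fun i => (st x).2 i 0 k))).
  by move=> x; rewrite Phi_of_coord.
by apply: gmeasurable_sum => k _ _; apply: gmeasurable_dispersion => // i; exact: m2.
Qed.

Lemma gmeasurable_sqnorm (v : T -> 'rV[R]_d) :
  (forall k, gmeasurable (fun x => v x 0 k)) -> gmeasurable (fun x => sqnorm (v x)).
Proof. by move=> mv; apply: gmeasurable_sum => k _ _; exact: gmeasurableX. Qed.

Lemma gmeasurable_favano_step st (B : T -> {set 'I_n}) (hh : T -> 'I_n -> 'rV[R]_d) :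
  gmeasurable_config st -> (forall i, gmeasurable (fun x => (i \in B x)%:R)) ->
  (forall i k, gmeasurable (fun x => hh x i 0 k)) ->
  gmeasurable_config (fun x => favano_step s eta (st x) (B x) (hh x)).
Proof.
move=> [m1 m2] mB mh.
have mW k : gmeasurable (fun x => (favano_step s eta (st x) (B x) (hh x)).1 0 k).
  apply: (eq_gmeasurable (f := fun x => (s.+1%:R)^-1 * ((st x).1 0 k +
      \sum_i ((i \in B x)%:R * ((st x).2 i 0 k - eta * hh x i 0 k))))).
    move=> x; rewrite favano_step1E /merged; congr (_ * (_ + _)).
    by rewrite [RHS]big_mkcond; apply: eq_bigr => i _; case: (i \in B x); rewrite ?mul1r ?mul0r.
  apply: gmeasurableM; first exact: gmeasurable_cst.
  apply: gmeasurableD => //; apply: gmeasurable_sum => i _ _; apply: gmeasurableM => //.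
  by apply: gmeasurableB => //; apply: gmeasurableM => //; exact: gmeasurable_cst.
split => // i k.
apply: (eq_gmeasurable (f := fun x => (i \in B x)%:R * (favano_step s eta (st x) (B x) (hh x)).1 0 k
    + (1 - (i \in B x)%:R) * (st x).2 i 0 k)).
  move=> x; rewrite /favano_step /=.
  by case: (i \in B x); rewrite /= ?mul1r ?mul0r ?subrr ?mul0r ?addr0 ?add0r ?subr0 ?mul1r.
apply: gmeasurableD; apply: gmeasurableM => //.
by apply: gmeasurableB => //; exact: gmeasurable_cst.
Qed.

End StepMeasurability.

Section ProcessMeasurability.
Context (R : realType) (dT : measure_display) (T : measurableType dT)
  (P : probability T R) (n s K d : nat) (eta : R) (w0 : 'rV[R]_d)
  (Ssel : nat -> T -> {set 'I_n}) (E : nat -> 'I_n -> T -> nat)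
  (htil : nat -> 'I_n -> nat -> T -> 'rV[R]_d) (stoch : bool).
Hypothesis K_gt0 : (1 <= K)%N.

Local Notation st := (favano_state P s K eta w0 Ssel E htil stoch).

(* [hcheck] with the clipped count [minn (E r i x) K] replaced by [c]: in both
   versions the weight depends on [E r i] only through the clipped count. *)
Definition alpha_at r (c : nat) (i : 'I_n) : R :=
  if stoch then fine (P [set y | (0 < E r i y)%N]) * c%:R
  else fine (\int[P]_y ((minn (E r i y) K)%:R)%:E)%E.
Definition hcheck_at r (c : nat) (i : 'I_n) (x : T) : 'rV[R]_d :=
  if (0 < c)%N then (alpha_at r c i)^-1 *: \sum_(1 <= q < c.+1) htil r i q x else 0.

Lemma hcheck_clipped r i x : hcheck P K E htil stoch r i x = hcheck_at r (minn (E r i x) K) i x.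
Proof. by rewrite /hcheck /hcheck_at /alphaw /alpha_at leq_min K_gt0 andbT. Qed.

Lemma sum_ord_select (m : nat) (f : nat -> R) : (m < K.+1)%N ->
  f m = \sum_(c < K.+1) (m == c)%:R * f c.
Proof.
move=> hm; rewrite (bigD1 (Ordinal hm)) //= eqxx mul1r big1 ?addr0 // => c cm.
suff -> : (m == c) = false by rewrite mul0r.
by apply/negbTE; move: cm; rewrite eq_sym -val_eqE.
Qed.

Variable t : nat.
(* The events of the past and of all oracle outputs of round t+1: everything except
   (S_{t+1}, E_{t+1}), which the hypotheses make independent of them. *)
Definition update_events := past_events Ssel E htil t.+1 `|`
  [set A | exists i q, (1 <= q)%N /\ vec_events (htil t.+1 i q) A].
Local Notation gmeasurable := (@gmeasurable R dT T update_events).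

Lemma gmeasurable_htil r i q k : (1 <= r <= t.+1)%N -> (1 <= q)%N ->
  gmeasurable (fun x => htil r i q x 0 k).
Proof.
move=> hr hq; apply: gmeasurable_generator => U mU.
case/andP: hr => r1; rewrite leq_eqVlt => /orP[/eqP ->|rt].
  by right; exists i, q; split => //; exists k, U.
left; exists r; split; first by rewrite r1.
by right; right; exists i, q; split => //; exists k, U.
Qed.

Lemma sigma_selected r B : (1 <= r <= t)%N -> <<s update_events >> [set x | Ssel r x = B].
Proof.
move=> /andP[r1 rt]; apply: sub_sigma_algebra; left; exists r; split.
  by rewrite r1 ltnS.
by left; exists B.
Qed.

Lemma sigma_counts r i m : (1 <= r <= t)%N -> <<s update_events >> [set x | E r i x = m].
Proof.
move=> /andP[r1 rt]; apply: sub_sigma_algebra; left; exists r; split.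
  by rewrite r1 ltnS.
by right; left; exists i, m.
Qed.

Lemma gmeasurable_in_selected r i : (1 <= r <= t)%N -> gmeasurable (fun x => (i \in Ssel r x)%:R).
Proof.
move=> hr.
apply: (eq_gmeasurable (f := fun x => \sum_(B : {set 'I_n}) (Ssel r x == B)%:R * (i \in B)%:R)).
  move=> x; rewrite (bigD1 (Ssel r x)) //= eqxx mul1r big1 ?addr0 // => B.
  by rewrite eq_sym => /negbTE ->; rewrite mul0r.
apply: gmeasurable_sum => B _ _; apply: gmeasurableM; last exact: gmeasurable_cst.
apply: gmeasurable_indic.
have -> : [set x | Ssel r x == B] = [set x | Ssel r x = B].
  by apply/seteqP; split => x /= /eqP.
exact: sigma_selected.
Qed.

Lemma gmeasurable_hcheck_at r c i k : (1 <= r <= t.+1)%N ->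
  gmeasurable (fun x => hcheck_at r c i x 0 k).
Proof.
move=> hr; rewrite /hcheck_at; case: (0 < c)%N.
  apply: (eq_gmeasurable (f := fun x =>
    (alpha_at r c i)^-1 * \sum_(q <- index_iota 1 c.+1) htil r i q x 0 k)).
    by move=> x; rewrite !mxE summxE.
  apply: gmeasurableM; first exact: gmeasurable_cst.
  apply: gmeasurable_sum => q; rewrite mem_index_iota => /andP[q1 _] _; exact: gmeasurable_htil.
by apply: (eq_gmeasurable (f := fun _ => 0)); [move=> x; rewrite mxE | exact: gmeasurable_cst].
Qed.

Lemma gmeasurable_hcheck r i k : (1 <= r <= t)%N ->
  gmeasurable (fun x => hcheck P K E htil stoch r i x 0 k).
Proof.
move=> hr.
apply: (eq_gmeasurable (f := fun x =>
  \sum_(c < K.+1) (minn (E r i x) K == c)%:R * hcheck_at r c i x 0 k)).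
  move=> x; rewrite hcheck_clipped.
  rewrite -(sum_ord_select (fun c => hcheck_at r c i x 0 k)) //.
  by rewrite ltnS geq_minr.
apply: gmeasurable_sum => c _ _; apply: gmeasurableM.
  by apply: gmeasurable_indic; apply: sigma_minn_eq => m; exact: sigma_counts.
by apply: gmeasurable_hcheck_at; case/andP: hr => -> /= /leqW.
Qed.

Lemma gmeasurable_state r : (r <= t)%N -> gmeasurable_config update_events (st r).
Proof.
elim: r => [_|r IH hr]; first by split => *; exact: gmeasurable_cst.
apply: gmeasurable_favano_step => [|i|i k]; first exact: IH (ltnW hr).
  by apply: gmeasurable_in_selected; rewrite hr.
by apply: gmeasurable_hcheck; rewrite hr.
Qed.

Hypothesis htil_measurable :
  forall r i q (k : 'I_d), measurable_fun setT (fun x => htil r i q x 0 k).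
Hypothesis counts_measurable : forall r i m, measurable [set x | E r i x = m].
Hypothesis selected_measurable : forall r (B : {set 'I_n}), measurable [set x | Ssel r x = B].

Lemma update_events_measurable : update_events `<=` measurable.
Proof.
move=> A [[r [_ [[B ->]|[[i [m ->]]|[i [q [_ [k [U [mU ->]]]]]]]]]]|[i [q [_ [k [U [mU ->]]]]]]].
- exact: selected_measurable.
- exact: counts_measurable.
- by have := htil_measurable r i q k measurableT mU; rewrite setTI.
- by have := htil_measurable t.+1 i q k measurableT mU; rewrite setTI.
Qed.

End ProcessMeasurability.

Section OneRound.
Context (R : realType) (dT : measure_display) (T : measurableType dT)
  (P : probability T R) (n s K d : nat) (eta : R) (w0 : 'rV[R]_d)
  (Ssel : nat -> T -> {set 'I_n}) (E : nat -> 'I_n -> T -> nat)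
  (htil : nat -> 'I_n -> nat -> T -> 'rV[R]_d) (stoch : bool).
Hypothesis K_gt0 : (1 <= K)%N.
Hypothesis s_range : (1 <= s <= n)%N.
Hypothesis htil_measurable :
  forall r i q (k : 'I_d), measurable_fun setT (fun x => htil r i q x 0 k).
Hypothesis counts_measurable : forall r i m, measurable [set x | E r i x = m].
Hypothesis selected_measurable : forall r (B : {set 'I_n}), measurable [set x | Ssel r x = B].
Variable t : nat.

Local Notation st := (favano_state P s K eta w0 Ssel E htil stoch).
Local Notation hcheck := (hcheck P K E htil stoch).
Local Notation hcheck_at := (hcheck_at P K E htil stoch).
Local Notation update_events := (update_events Ssel E htil t).
Local Notation gmeasurable := (@gmeasurable R dT T update_events).

Definition selection_events : set (set T) :=
  subset_events (Ssel t.+1) `|` [set A | exists i, nat_events (E t.+1 i) A].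

Definition clipped_counts (x : T) : {ffun 'I_n -> 'I_K.+1} :=
  [ffun i => inord (minn (E t.+1 i x) K)].

Definition Phi_after (B : {set 'I_n}) (c : {ffun 'I_n -> 'I_K.+1}) (x : T) : R :=
  Phi_of (favano_step s eta (st t x) B (fun i => hcheck_at t.+1 (c i) i x)).

Definition contraction_bound (c : {ffun 'I_n -> 'I_K.+1}) (x : T) : R :=
  (1 - favano_kappa R n s) * Phi_of (st t x)
  + 3 * (s%:R ^+ 2 / n%:R) * eta ^+ 2 * \sum_i sqnorm (hcheck_at t.+1 (c i) i x).

Definition uniform_weight (B : {set 'I_n}) : R :=
  if #|B| == s then ('C(n, s)%:R)^-1 else 0.

Lemma hcheck_clipped_counts i x : hcheck t.+1 i x = hcheck_at t.+1 (clipped_counts x i) i x.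
Proof. by rewrite hcheck_clipped // ffunE inordK // ltnS geq_minr. Qed.

Lemma Phi_succE x : Phi_of (st t.+1 x) = Phi_after (Ssel t.+1 x) (clipped_counts x) x.
Proof.
rewrite /Phi_after /=; congr (Phi_of (favano_step _ _ _ _ _)).
by apply/funext => i; rewrite hcheck_clipped_counts.
Qed.

Lemma contraction_boundE x :
  contraction_bound (clipped_counts x) x =
  (1 - favano_kappa R n s) * Phi_of (st t x)
  + 3 * (s%:R ^+ 2 / n%:R) * eta ^+ 2 * \sum_i sqnorm (hcheck t.+1 i x).
Proof. by congr (_ + _ * _); apply: eq_bigr => i _; rewrite hcheck_clipped_counts. Qed.

Lemma sigma_clipped_counts (H : set (set T)) :
  (forall i m, <<s H >> [set x | E t.+1 i x = m]) ->
  forall c, <<s H >> [set x | clipped_counts x = c].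
Proof.
move=> countsH c.
have -> : [set x | clipped_counts x = c] =
    \bigcap_(i in [set: 'I_n]) [set x | minn (E t.+1 i x) K == c i].
  apply/seteqP; split => x /= cx.
    by move=> i _ /=; rewrite -cx ffunE inordK // ltnS geq_minr.
  apply/ffunP => i; rewrite ffunE.
  by have /= /eqP -> := cx i I; exact: inord_val.
apply: (@fin_bigcap_measurable _ (g_sigma_algebraType H)) => [|i _]; first exact: finite_finset.
by apply: sigma_minn_eq => m; exact: countsH.
Qed.

Let one_sub_kappa_ge0 : 0 <= 1 - favano_kappa R n s.
Proof.
have n_gt0 : (0 < n)%N by case/andP: s_range => s1 sn; exact: leq_trans s1 sn.
by rewrite subr_ge0 favano_kappa_le1 //; case/andP: s_range.
Qed.

Let step_coef_ge0 : 0 <= 3 * (s%:R ^+ 2 / n%:R) * eta ^+ 2.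
Proof. by apply: mulr_ge0; [apply: mulr_ge0 => //; apply: divr_ge0|exact: sqr_ge0]. Qed.

Let update_measurable : update_events `<=` measurable :=
  update_events_measurable htil_measurable counts_measurable selected_measurable.

Lemma selection_events_measurable : selection_events `<=` measurable.
Proof. by move=> A [[B ->]|[i [m ->]]]; [exact: selected_measurable|exact: counts_measurable]. Qed.

Lemma gmeasurable_Phi_after B c : gmeasurable (Phi_after B c).
Proof.
apply: gmeasurable_Phi_of; apply: gmeasurable_favano_step => [|i|i k].
- exact: (gmeasurable_state P s eta w0 Ssel E htil stoch K_gt0 (leqnn t)).
- exact: gmeasurable_cst.
by apply: gmeasurable_hcheck_at; rewrite /= leqnn.
Qed.

Lemma gmeasurable_contraction_bound c : gmeasurable (contraction_bound c).
Proof.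
apply: gmeasurableD; apply: gmeasurableM; try exact: gmeasurable_cst.
  apply: gmeasurable_Phi_of.
  exact: (gmeasurable_state P s eta w0 Ssel E htil stoch K_gt0 (leqnn t)).
apply: gmeasurable_sum => i _ _; apply: gmeasurable_sqnorm => k.
by apply: gmeasurable_hcheck_at; rewrite /= leqnn.
Qed.

Lemma contraction_bound_ge0 c x : 0 <= contraction_bound c x.
Proof.
apply: addr_ge0; apply: mulr_ge0; rewrite ?Phi_of_ge0 //.
by apply: sumr_ge0 => i _; exact: sqnorm_ge0.
Qed.

Lemma sum_uniform_Phi_after_le c x :
  \sum_B uniform_weight B * Phi_after B c x <= contraction_bound c x.
Proof.
have C_gt0 : (0 : R) < 'C(n, s)%:R by rewrite ltr0n bin_gt0; case/andP: s_range.
rewrite (eq_bigr (fun B : {set 'I_n} =>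
    if #|B| == s then ('C(n, s)%:R)^-1 * Phi_after B c x else 0)); last first.
  by move=> B _; rewrite /uniform_weight; case: ifP; rewrite ?mul0r.
rewrite -big_mkcond /= -mulr_sumr -(ler_pM2l C_gt0) mulrA mulfV ?gt_eqF // mul1r.
have := sum_subsets_Phi_step_le eta s_range (st t x) (fun i => hcheck_at t.+1 (c i) i x).
by rewrite subset_countE /contraction_bound !mulrA.
Qed.

Lemma sum_weighted_Phi_after_le c :
  (\sum_B (uniform_weight B)%:E * \int[P]_x (Phi_after B c x)%:E
   <= \int[P]_x (contraction_bound c x)%:E)%E.
Proof.
have w_ge0 B : 0 <= uniform_weight B.
  by rewrite /uniform_weight; case: ifP => // _; rewrite invr_ge0.
have mPhi B : measurable_fun setT (Phi_after B c).
  by apply: (gmeasurable_measurable_fun update_measurable); exact: gmeasurable_Phi_after.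
rewrite -ge0_integral_wsum //; last by move=> B x; exact: Phi_of_ge0.
apply: ge0_le_integral => //.
- by move=> x _; rewrite lee_fin; apply: sumr_ge0 => B _; rewrite mulr_ge0 ?Phi_of_ge0.
- apply/measurable_EFinP; apply: measurable_sum => B.
  by apply: measurable_funM => //; exact: measurable_cst.
- apply/measurable_EFinP.
  by apply: (gmeasurable_measurable_fun update_measurable); exact: gmeasurable_contraction_bound.
- by move=> x _; rewrite lee_fin; exact: sum_uniform_Phi_after_le.
Qed.

Lemma measurable_sqnorm_hcheck i : measurable_fun setT (fun x => sqnorm (hcheck t.+1 i x)).
Proof.
apply: (gmeasurable_measurable_fun (update_events_measurable (t := t.+1)
  htil_measurable counts_measurable selected_measurable)).
by apply: gmeasurable_sqnorm => k; apply: gmeasurable_hcheck; rewrite ?leqnn.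
Qed.

Hypothesis S_uniform : forall B, P [set x | Ssel t.+1 x = B] = (uniform_weight B)%:E.
Hypothesis indep_update : indep_gen P selection_events update_events.
Hypothesis indep_SE :
  indep_gen P (subset_events (Ssel t.+1)) [set A | exists i, nat_events (E t.+1 i) A].

Let counts_sel c : <<s selection_events >> [set x | clipped_counts x = c].
Proof. by apply: sigma_clipped_counts => i m; apply: sub_sigma_algebra; right; exists i, m. Qed.

Lemma integral_Phi_succE :
  (\int[P]_x (Phi_of (st t.+1 x))%:E = \sum_c \sum_B
     (uniform_weight B)%:E * P [set x | clipped_counts x = c]
     * \int[P]_x (Phi_after B c x)%:E)%E.
Proof.
pose sel x := (Ssel t.+1 x, clipped_counts x).
have selE p : [set x | sel x = p] =
    [set x | Ssel t.+1 x = p.1] `&` [set x | clipped_counts x = p.2].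
  by apply/seteqP; split => x; rewrite /sel /=; [move=> <-|case: p => B c /= [-> ->]].
have sel_sigma p : <<s selection_events >> [set x | sel x = p].
  rewrite selE; apply: (@measurableI _ (g_sigma_algebraType selection_events)).
  - by apply: sub_sigma_algebra; left; exists p.1.
  - exact: counts_sel.
have sel_prob p : P [set x | sel x = p] =
    ((uniform_weight p.1)%:E * P [set x | clipped_counts x = p.2])%E.
  rewrite selE indep_SE ?S_uniform //; first by apply: sub_sigma_algebra; exists p.1.
  by apply: sigma_clipped_counts => i m; apply: sub_sigma_algebra; exists i, m.
(* Given [sel x], Phi_{t+1} is a function of the independent [update_events]. *)
transitivity (\sum_p P [set x | sel x = p] * \int[P]_x (Phi_after p.1 p.2 x)%:E)%E.
  under eq_integral do rewrite Phi_succE.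
  exact: (ge0_integral_indep_select selection_events_measurable update_measurable
    indep_update sel_sigma (fun p => gmeasurable_Phi_after p.1 p.2) (fun p x => Phi_of_ge0 _)).
under eq_bigr do rewrite sel_prob.
by rewrite -(pair_bigA _ (fun B c => (uniform_weight B)%:E * P [set x | clipped_counts x = c]
  * \int[P]_x (Phi_after B c x)%:E)%E) exchange_big.
Qed.

Lemma integral_Phi_succ_le :
  (\int[P]_x (Phi_of (st t.+1 x))%:E <=
   (1 - favano_kappa R n s)%:E * \int[P]_x (Phi_of (st t x))%:E
   + (3 * (s%:R ^+ 2 / n%:R) * eta ^+ 2)%:E *
     \sum_i \int[P]_x (sqnorm (hcheck t.+1 i x))%:E)%E.
Proof.
rewrite integral_Phi_succE.
apply: (@le_trans _ _ (\sum_c P [set x | clipped_counts x = c]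
                          * \int[P]_x (contraction_bound c x)%:E)%E).
  apply: lee_sum => c _; under eq_bigr do rewrite muleAC.
  rewrite -ge0_sume_distrl; last first.
    move=> B _; apply: mule_ge0; last by apply: integral_ge0 => x _; rewrite lee_fin Phi_of_ge0.
    by rewrite lee_fin /uniform_weight; case: ifP => // _; rewrite invr_ge0.
  by rewrite muleC lee_wpmul2l // sum_weighted_Phi_after_le.
rewrite -(ge0_integral_indep_select selection_events_measurable update_measurable
  indep_update counts_sel gmeasurable_contraction_bound contraction_bound_ge0).
under eq_integral do rewrite contraction_boundE.
rewrite ge0_integral_affine //.
- apply: (gmeasurable_measurable_fun update_measurable); apply: gmeasurable_Phi_of.
  exact: (gmeasurable_state P s eta w0 Ssel E htil stoch K_gt0 (leqnn t)).
- exact: measurable_sqnorm_hcheck.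
- by move=> x; exact: Phi_of_ge0.
- by move=> i x; exact: sqnorm_ge0.
Qed.

End OneRound.

Theorem mainTheorem4 (R : realType) (dT : measure_display) (T : measurableType dT)
  (P : probability T R) (n s K d : nat) (eta : R)
  (f : 'I_n -> 'rV[R]_d -> R) (w0 : 'rV[R]_d)
  (Ssel : nat -> T -> {set 'I_n}) (E : nat -> 'I_n -> T -> nat)
  (htil : nat -> 'I_n -> nat -> T -> 'rV[R]_d) (stoch : bool) :
  (1 <= n)%N -> (1 <= s <= n)%N -> (1 <= K)%N -> (1 <= d)%N -> 0 < eta ->
  (forall i x, differentiable (f i) x) ->
  (forall t i q (k : 'I_d), measurable_fun setT (fun x => htil t i q x 0 k)) ->
  (forall t i m, measurable [set x | E t i x = m]) ->
  (forall t (B : {set 'I_n}), measurable [set x | Ssel t x = B]) ->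
  (forall t i q (k : 'I_d), (1 <= t)%N -> (1 <= q)%N ->
     let xi := fun x => htil t i q x -
        gradf (f i) (query_point eta htil
           ((favano_state P s K eta w0 Ssel E htil stoch t.-1 x).2 i) t i q x) in
     P.-integrable setT (fun x => (xi x 0 k)%:E) /\
     forall A, <<s past_events Ssel E htil t `|`
                   [set B | exists r, (1 <= r < q)%N /\ vec_events (htil t i r) B] >> A ->
       (\int[P]_(x in A) (xi x 0 k)%:E = 0)%E) ->
  (forall t i, (1 <= t)%N -> (0 < P [set x | (0 < E t i x)%N])%E) ->
  (forall t (B : {set 'I_n}), (1 <= t)%N ->
     P [set x | Ssel t x = B] = (if #|B| == s then ('C(n, s)%:R)^-1 else 0)%:E) ->
  (forall t, (1 <= t)%N ->
     indep_gen P (subset_events (Ssel t) `|` [set A | exists i, nat_events (E t i) A])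
       (past_events Ssel E htil t `|`
          [set A | exists i q, (1 <= q)%N /\ vec_events (htil t i q) A])) ->
  (forall t, (1 <= t)%N ->
     indep_gen P (subset_events (Ssel t)) [set A | exists i, nat_events (E t i) A]) ->
  forall t : nat,
  P.-integrable setT (fun x => (Phi_of (favano_state P s K eta w0 Ssel E htil stoch t x))%:E) ->
  P.-integrable setT (fun x => (Phi_of (favano_state P s K eta w0 Ssel E htil stoch t.+1 x))%:E) ->
  (forall i, P.-integrable setT (fun x => (sqnorm (hcheck P K E htil stoch t.+1 i x))%:E)) ->
  let kappa : R := n%:R^-1 * ((s * (n - s))%:R / (2 * (n.+1) * (s.+1))%:R) in
  ('E_P[fun x => Phi_of (favano_state P s K eta w0 Ssel E htil stoch t.+1 x)]
   <= (1 - kappa)%:E * 'E_P[fun x => Phi_of (favano_state P s K eta w0 Ssel E htil stoch t x)]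
      + (3 * (s%:R ^+ 2 / n%:R) * eta ^+ 2)%:E *
        \sum_(i < n) 'E_P[fun x => sqnorm (hcheck P K E htil stoch t.+1 i x)])%E.
Proof.
move=> _ s_range K_gt0 _ _ _ htil_measurable counts_measurable selected_measurable _ _
  S_uniform indep_update indep_SE t _ _ _.
cbv zeta; rewrite !expectation.unlock.
exact: (integral_Phi_succ_le eta w0 stoch K_gt0 s_range htil_measurable counts_measurable
  selected_measurable (t := t) (fun B => S_uniform t.+1 B isT) (indep_update t.+1 isT)
  (indep_SE t.+1 isT)).
Qed.
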